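(* Let $K$ be a field and let $G\in K^{m\times p}(s)$ be written as $G=W_2+P_2D_2^{-1}Q_2$, where $W_2\in K^{m\times p}(s)$ is strictly proper, $P_2\in K^{m\times n_2}_\infty(s)$ and $Q_2\in K^{n_2\times p}_\infty(s)$ are proper, and $D_2\in K^{n_2\times n_2}[s]$ is a nonsingular polynomial matrix. Write $\pi_+G=\sum_{\nu=0}^tG_\nu s^\nu$ with $G_\nu\in K^{m\times p}$. Define the $K$-linear maps $B_2:K^p\to U^{D_2}$ by $B_2\xi=\rho^{D_2}(Q_2\xi)$, $N_2:U^{D_2}\to U^{D_2}$ by $N_2\bar x=s^{-1}\cdot\bar x$, and $C_2:U^{D_2}\to K^m$ by $C_2\bar x=-\bigl(P_2D_2^{-1}\bar x\bigr)_0$. Then $G_\nu=-C_2N_2^\nu B_2$ for $\nu=0,1,\dots,t$, $N_2$ is nilpotent, and $$\sum_{\nu=0}^tG_\nu s^\nu=C_2(sN_2-I)^{-1}B_2.$$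
   Context: $K(s)$ denotes the field of rational functions over $K$. A rational function $f$ is proper if $f=0$ or $f=p/q$ with $p,q\in K[s]$, $q\ne0$, $\deg p\le\deg q$, and strictly proper if $f=0$ or $\deg p<\deg q$; $K_\infty(s)$ is the ring of proper rational functions, with vectors/matrices $K^n_\infty(s)$, $K^{m\times r}_\infty(s)$. One has $K(s)=K[s]\oplus s^{-1}K_\infty(s)$; $\pi_+:K(s)\to K[s]$ is the projection onto the polynomial part, extended entrywise, and $(f)_0=(\pi_+f)(0)$ entrywise. For nonsingular $D\in K^{n\times n}[s]$, $\rho^D:K^n_\infty(s)\to K^n[s]$ is $\rho^Dx=D\pi_+(D^{-1}x)$, $\bar x=\rho^Dx$, and $U^D=\operatorname{Im}\rho^D$ is a $K_\infty(s)$-module (and finite-dimensional $K$-vector space) via $q\cdot\bar x=\overline{qx}$. *)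

(* Rational functions K(s) are modelled by {fraction {poly K}}. *)
From HB Require Import structures.
From mathcomp Require Import all_boot all_order all_algebra.
From Stdlib Require Import ClassicalEpsilon.
Set Implicit Arguments. Unset Strict Implicit. Unset Printing Implicit Defensive.
Import GRing.Theory.
Local Open Scope ring_scope.

Notation RF K := {fraction {poly K}}.

Section Defs.
Variable K : fieldType.

Definition tof (p : {poly K}) : RF K := tofrac p.

Definition sF : RF K := tof 'X.

(* f is proper: f = 0 or f = p/q with q <> 0, deg p <= deg q
   (size = deg + 1, and p = 0 covers f = 0) *)
Definition properf (f : RF K) : Prop :=
  exists p q : {poly K}, q != 0 /\ (size p <= size q)%N /\ f = tof p / tof q.

Definition sproperf (f : RF K) : Prop :=
  exists p q : {poly K}, q != 0 /\ (size p < size q)%N /\ f = tof p / tof q.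

Definition proper_mx m n (M : 'M[RF K]_(m, n)) : Prop :=
  forall i j, properf (M i j).
Definition sproper_mx m n (M : 'M[RF K]_(m, n)) : Prop :=
  forall i j, sproperf (M i j).

(* pi_+ : projection onto the polynomial part along the strictly proper part,
   i.e. the (unique) polynomial r with f - r strictly proper *)
Definition pip (f : RF K) : {poly K} :=
  epsilon (inhabits 0) (fun r : {poly K} => sproperf (f - tof r)).

Definition pip_mx m n (M : 'M[RF K]_(m, n)) : 'M[{poly K}]_(m, n) :=
  map_mx pip M.

(* (f)_0 = (pi_+ f)(0), entrywise *)
Definition at0_mx m n (M : 'M[RF K]_(m, n)) : 'M[K]_(m, n) :=
  map_mx (fun f => (pip f).[0]) M.

Definition polyF m n (M : 'M[{poly K}]_(m, n)) : 'M[RF K]_(m, n) :=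
  map_mx tof M.

Definition constF m n (M : 'M[K]_(m, n)) : 'M[RF K]_(m, n) :=
  map_mx (fun a => tof a%:P) M.

Definition rho n (D : 'M[{poly K}]_n) (x : 'cV[RF K]_n) : 'cV[{poly K}]_n :=
  D *m pip_mx (invmx (polyF D) *m x).

(* U^D = Im rho^D (on proper vectors) *)
Definition inU n (D : 'M[{poly K}]_n) (v : 'cV[{poly K}]_n) : Prop :=
  exists x, proper_mx x /\ rho D x = v.

Definition rho_pre n (D : 'M[{poly K}]_n) (v : 'cV[{poly K}]_n) : 'cV[RF K]_n :=
  epsilon (inhabits 0) (fun x => proper_mx x /\ rho D x = v).

(* module action q . xbar = rho^D (q x) where xbar = rho^D x *)
Definition Uact n (D : 'M[{poly K}]_n) (q : RF K) (v : 'cV[{poly K}]_n)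
  : 'cV[{poly K}]_n := rho D (q *: rho_pre D v).

Definition Bmap n p (D : 'M[{poly K}]_n) (Q : 'M[RF K]_(n, p)) (xi : 'cV[K]_p)
  : 'cV[{poly K}]_n := rho D (Q *m constF xi).

Definition Nmap n (D : 'M[{poly K}]_n) (v : 'cV[{poly K}]_n) : 'cV[{poly K}]_n :=
  Uact D sF^-1 v.

Definition Cmap m n (P : 'M[RF K]_(m, n)) (D : 'M[{poly K}]_n)
  (v : 'cV[{poly K}]_n) : 'cV[K]_m :=
  - at0_mx (P *m invmx (polyF D) *m polyF v).

Definition Gcoef m p (G : 'M[RF K]_(m, p)) (nu : nat) : 'M[K]_(m, p) :=
  map_mx (fun f => (pip f)`_nu) G.

Definition monvec m (c : 'cV[K]_m) (nu : nat) : 'cV[{poly K}]_m :=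
  map_mx (fun a => a%:P * 'X^nu) c.

End Defs.

From HB Require Import structures.
From mathcomp Require Import all_boot all_order all_algebra.
From mathcomp Require Import zify.
From Stdlib Require Import ClassicalEpsilon.
Set Implicit Arguments. Unset Strict Implicit. Unset Printing Implicit Defensive.
Import GRing.Theory.
Local Open Scope ring_scope.

(** The polynomial part [pi_+] is additive with kernel the strictly proper
    functions, the constant term of [pi_+ (s^-k f)] is the [k]-th coefficient
    of [pi_+ f], and [rho^D x = rho^D y] exactly when [D^-1 (x - y)] is strictly
    proper.  Hence [N_2^nu B_2 xi = rho (s^-nu Q_2 xi)] and, [P_2] being proper,
    [C_2] of it is minus the constant term of [pi_+ (s^-nu P_2 D_2^-1 Q_2 xi)],
    which differs from [s^-nu G xi] by the strictly proper [s^-nu W_2 xi].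
    [N_2] is nilpotent because [D_2^-1 = adj D_2 / det D_2] and [s^-k adj D_2]
    is strictly proper as soon as [k] bounds the sizes of the entries of
    [adj D_2].  Both sides of the sum identity vanish beyond [t] and beyond the
    nilpotency index, so it follows from the coefficientwise one. *)

Lemma frac_numden (R : idomainType) (x : {fraction R}) :
  exists a b, b != 0 /\ x = tofrac a / tofrac b.
Proof.
move: x; apply: (@quotW _ (FracField.type R)) => r.
exists \n_r, \d_r; split; first exact: denom_ratioP.
have d0 : tofrac \d_r != 0 :> {fraction R} by rewrite tofrac_eq0 denom_ratioP.
apply: (canRL (mulfK d0)); unlock tofrac; rewrite !piE.
apply/eqmodP; rewrite /= FracField.equivfE /FracField.mulf /=.
by rewrite !numden_Ratio ?(oner_eq0, mulf_neq0, denom_ratioP) // !mulr1 mulrC.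
Qed.

Section FractionSizes.
Variables (R : idomainType) (a b c d : {poly R}) (k : nat).

Lemma size_fracD : b != 0 -> d != 0 ->
  (size a + k <= size b)%N -> (size c + k <= size d)%N ->
  (size (a * d + c * b)%R + k <= size (b * d)%R)%N.
Proof.
move=> b0 d0; rewrite (size_mul b0 d0); rewrite -!size_poly_gt0 in b0 d0.
move: (size_polyD (a * d) (c * b)) (size_polyMleq a d) (size_polyMleq c b).
(* [lia] does not treat these [size] terms as atoms unless they are named. *)
set x := size (a * d + c * b)%R; set y := size (a * d)%R; set z := size (c * b)%R.
lia.
Qed.

Lemma size_fracM : b != 0 -> d != 0 ->
  (size a <= size b)%N -> (size c + k <= size d)%N ->
  (size (a * c)%R + k <= size (b * d)%R)%N.
Proof.
move=> b0 d0; rewrite (size_mul b0 d0); rewrite -!size_poly_gt0 in b0 d0.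
move: (size_polyMleq a c); set x := size (a * c)%R; lia.
Qed.
End FractionSizes.

Section ProperFractions.
Variable K : fieldType.
Implicit Types (f g : RF K) (a b c d r : {poly K}).
Local Notation tof := (@tof K).
Local Notation sF := (sF K).
Local Notation properf := (@properf K).
Local Notation sproperf := (@sproperf K).

Lemma tof_eq0 a : (tof a == 0) = (a == 0).
Proof. exact: tofrac_eq0. Qed.

Lemma tof_inj : injective tof.
Proof. by move=> a b /eqP; rewrite /tof tofrac_eq => /eqP. Qed.

Lemma tof_divD a b c d : b != 0 -> d != 0 ->
  tof a / tof b + tof c / tof d = tof (a * d + c * b) / tof (b * d).
Proof. by move=> b0 d0; rewrite addf_div ?tof_eq0 // /tof rmorphD !rmorphM. Qed.

Lemma tof_divM a b c d :
  tof a / tof b * (tof c / tof d) = tof (a * c) / tof (b * d).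
Proof. by rewrite mulf_div /tof !rmorphM. Qed.

Lemma sproperf_properf f : sproperf f -> properf f.
Proof. by case=> a [b [b0 [ab ->]]]; exists a, b; do 2?split=> //; apply: ltnW. Qed.

Lemma sproperf0 : sproperf 0.
Proof. by exists 0, 1; rewrite oner_eq0 size_poly0 size_poly1 /tof rmorph0 mul0r. Qed.

Lemma properfC (c : K) : properf (tof c%:P).
Proof.
exists c%:P, 1; rewrite oner_eq0 size_poly1 size_polyC /tof rmorph1 divr1.
by case: (c != 0).
Qed.

Lemma properfD f g : properf f -> properf g -> properf (f + g).
Proof.
move=> [a [b [b0 [ab ->]]]] [c [d [d0 [cd ->]]]].
exists (a * d + c * b), (b * d); rewrite mulf_neq0 // tof_divD //.
by do 2?split=> //; move: (@size_fracD _ a b c d 0); rewrite !addn0; apply.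
Qed.

Lemma sproperfD f g : sproperf f -> sproperf g -> sproperf (f + g).
Proof.
move=> [a [b [b0 [ab ->]]]] [c [d [d0 [cd ->]]]].
exists (a * d + c * b), (b * d); rewrite mulf_neq0 // tof_divD //.
by do 2?split=> //; move: (@size_fracD _ a b c d 1); rewrite !addn1; apply.
Qed.

Lemma sproperfN f : sproperf f -> sproperf (- f).
Proof.
case=> a [b [b0 [ab ->]]]; exists (- a), b.
by rewrite size_polyN /tof rmorphN mulNr.
Qed.

Lemma sproperfB f g : sproperf f -> sproperf g -> sproperf (f - g).
Proof. by move=> sf sg; apply/sproperfD/sproperfN. Qed.

Lemma properfM f g : properf f -> properf g -> properf (f * g).
Proof.
move=> [a [b [b0 [ab ->]]]] [c [d [d0 [cd ->]]]].
exists (a * c), (b * d); rewrite mulf_neq0 // tof_divM.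
by do 2?split=> //; move: (@size_fracM _ a b c d 0); rewrite !addn0; apply.
Qed.

Lemma sproperfMl f g : properf f -> sproperf g -> sproperf (f * g).
Proof.
move=> [a [b [b0 [ab ->]]]] [c [d [d0 [cd ->]]]].
exists (a * c), (b * d); rewrite mulf_neq0 // tof_divM.
by do 2?split=> //; move: (@size_fracM _ a b c d 1); rewrite !addn1; apply.
Qed.

Lemma sproperfMr f g : sproperf f -> properf g -> sproperf (f * g).
Proof. by move=> sf pg; rewrite mulrC; apply: sproperfMl. Qed.

Lemma sFVXE k : sF^-1 ^+ k = (tof 'X^k)^-1.
Proof. by rewrite exprVn /sF /tof rmorphXn. Qed.

Lemma properf_tofV a : a != 0 -> properf (tof a)^-1.
Proof.
move=> a0; exists 1, a; rewrite size_poly1 size_poly_gt0 /tof rmorph1 mul1r.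
by do 2?split.
Qed.

Lemma properf_sFVX k : properf (sF^-1 ^+ k).
Proof. by rewrite sFVXE; apply/properf_tofV/monic_neq0/monicXn. Qed.

Lemma sproperf_sFVXM a k : (size a <= k)%N -> sproperf (sF^-1 ^+ k * tof a).
Proof.
move=> ak; exists a, 'X^k; rewrite monic_neq0 ?monicXn // size_polyXn.
by rewrite sFVXE mulrC.
Qed.

Lemma sproperf_tof r : sproperf (tof r) -> r = 0.
Proof.
case=> a [b [b0 [ab]]]; have b0' : tof b != 0 by rewrite tof_eq0.
move/(canLR (divfK b0')); rewrite /tof -rmorphM => /tof_inj ra.
apply/eqP; apply: contraTT ab => r0.
have r_gt0 : (0 < size r)%N by rewrite size_poly_gt0.
rewrite -ra size_mul // -leqNgt; move: r_gt0.
by set x := size r; set y := size b; lia.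
Qed.

End ProperFractions.

Section PolynomialPart.
Variable K : fieldType.
Implicit Types (f g : RF K) (r : {poly K}).
Local Notation tof := (@tof K).
Local Notation sF := (sF K).
Local Notation sproperf := (@sproperf K).

Lemma pip_exists f : exists r, sproperf (f - tof r).
Proof.
have [a [b [b0 ->]]] := frac_numden f.
have b0' : tof b != 0 by rewrite tof_eq0.
exists (a %/ b), (a %% b), b; do 2?split=> //; first by rewrite ltn_modp.
rewrite {1}(divp_eq a b) /tof rmorphD rmorphM /= mulrDl mulfK //.
by rewrite addrAC subrr add0r.
Qed.

Lemma pipP f : sproperf (f - tof (pip f)).
Proof. exact: (epsilon_spec _ _ (pip_exists f)). Qed.

Lemma pip_unique f r : sproperf (f - tof r) -> pip f = r.
Proof.
move=> fr; apply/eqP; rewrite -subr_eq0; apply/eqP/sproperf_tof.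
have -> : tof (pip f - r) = (f - tof r) - (f - tof (pip f)).
  by rewrite [RHS]addrC opprB addrA subrK /tof rmorphB.
exact: sproperfB (pipP f).
Qed.

Lemma pip_eq f g : sproperf (f - g) -> pip f = pip g.
Proof.
move=> fg; apply: pip_unique.
by rewrite -(subrK g f) -addrA; apply: sproperfD (pipP g).
Qed.

Lemma pip0 : pip (0 : RF K) = 0.
Proof. by apply: pip_unique; rewrite /tof rmorph0 subr0; apply: sproperf0. Qed.

Lemma pipD f g : pip (f + g) = pip f + pip g.
Proof.
apply: pip_unique; rewrite /tof rmorphD opprD addrACA.
exact: sproperfD (pipP f) (pipP g).
Qed.

Lemma pip_sum I (s : seq I) (P : pred I) (F : I -> RF K) :
  pip (\sum_(i <- s | P i) F i) = \sum_(i <- s | P i) pip (F i).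
Proof. exact: (big_morph _ pipD pip0). Qed.

Lemma pipMC f (c : K) : pip (f * tof c%:P) = pip f * c%:P.
Proof.
apply: pip_unique; rewrite /tof rmorphM -mulrBl.
exact: sproperfMr (pipP f) (properfC c).
Qed.

Lemma coef0_pip_sFVXM f k : (pip (sF^-1 ^+ k * f))`_0 = (pip f)`_k.
Proof.
set r := pip f; suff -> : pip (sF^-1 ^+ k * f) = drop_poly k r.
  by rewrite coef_drop_poly.
apply: pip_unique.
have Xk0 : tof 'X^k != 0 by rewrite tof_eq0 monic_neq0 ?monicXn.
have -> : sF^-1 ^+ k * f - tof (drop_poly k r)
    = sF^-1 ^+ k * (f - tof r) + sF^-1 ^+ k * tof (take_poly k r).
  rewrite -mulrDr -{2}(poly_take_drop k r) /tof rmorphD rmorphM /=.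
  by rewrite opprD addrA addrAC subrK mulrBr sFVXE mulrCA mulVf ?mulr1.
apply: sproperfD; first exact: sproperfMl (properf_sFVX _ k) (pipP f).
exact/sproperf_sFVXM/size_take_poly.
Qed.
End PolynomialPart.

Section ProperMatrices.
Variable K : fieldType.
Local Notation sproper_mx := (@sproper_mx K).
Local Notation proper_mx := (@proper_mx K).
Local Notation properf := (@properf K).
Local Notation sproperf := (@sproperf K).

Lemma sproper_mxD m n (A B : 'M[RF K]_(m, n)) :
  sproper_mx A -> sproper_mx B -> sproper_mx (A + B).
Proof. by move=> sA sB i j; rewrite mxE; apply: sproperfD. Qed.

Lemma sproper_mxB m n (A B : 'M[RF K]_(m, n)) :
  sproper_mx A -> sproper_mx B -> sproper_mx (A - B).
Proof. by move=> sA sB i j; rewrite !mxE; apply: sproperfB. Qed.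

Lemma sproper_mxZ m n q (A : 'M[RF K]_(m, n)) :
  properf q -> sproper_mx A -> sproper_mx (q *: A).
Proof. by move=> pq sA i j; rewrite mxE; apply: sproperfMl. Qed.

Lemma proper_mxZ m n q (A : 'M[RF K]_(m, n)) :
  properf q -> proper_mx A -> proper_mx (q *: A).
Proof. by move=> pq pA i j; rewrite mxE; apply: properfM. Qed.

Lemma proper_mxM m n k (A : 'M[RF K]_(m, n)) (B : 'M[RF K]_(n, k)) :
  proper_mx A -> proper_mx B -> proper_mx (A *m B).
Proof.
move=> pA pB i j; rewrite mxE.
apply: (big_ind properf) => [|f g|l _]; last exact: properfM.
  exact/sproperf_properf/sproperf0.
exact: properfD.
Qed.

Lemma sproper_mxMl m n k (A : 'M[RF K]_(m, n)) (B : 'M[RF K]_(n, k)) :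
  proper_mx A -> sproper_mx B -> sproper_mx (A *m B).
Proof.
move=> pA sB i j; rewrite mxE.
apply: (big_ind sproperf) => [|f g|l _]; last exact: sproperfMl.
  exact: sproperf0.
exact: sproperfD.
Qed.

Lemma sproper_mxMr m n k (A : 'M[RF K]_(m, n)) (B : 'M[RF K]_(n, k)) :
  sproper_mx A -> proper_mx B -> sproper_mx (A *m B).
Proof.
move=> sA pB i j; rewrite mxE.
apply: (big_ind sproperf) => [|f g|l _]; last exact: sproperfMr.
  exact: sproperf0.
exact: sproperfD.
Qed.

Lemma proper_mx_constF m n (A : 'M[K]_(m, n)) : proper_mx (constF A).
Proof. by move=> i j; rewrite mxE; apply: properfC. Qed.

Lemma polyF_inj m n : injective (@polyF K m n).
Proof.
move=> A B /matrixP AB; apply/matrixP => i j.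
by apply: tof_inj; move: (AB i j); rewrite !mxE.
Qed.

Lemma polyF0 m n : polyF (0 : 'M[{poly K}]_(m, n)) = 0.
Proof. by apply/matrixP => i j; rewrite !mxE /tof rmorph0. Qed.

Lemma pip_mxP m n (M : 'M[RF K]_(m, n)) : sproper_mx (M - polyF (pip_mx M)).
Proof. by move=> i j; rewrite !mxE; apply: pipP. Qed.

Lemma pip_mx_unique m n (M : 'M[RF K]_(m, n)) R :
  sproper_mx (M - polyF R) -> pip_mx M = R.
Proof.
move=> sMR; apply/matrixP => i j; rewrite mxE; apply: pip_unique.
by move: (sMR i j); rewrite !mxE.
Qed.

End ProperMatrices.

Section Realization.
Variables (K : fieldType) (n : nat) (D : 'M[{poly K}]_n).
Hypothesis detD : \det D != 0.
Local Notation Di := (invmx (polyF D)).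
Local Notation sF := (sF K).
Local Notation sproper_mx := (@sproper_mx K).
Local Notation proper_mx := (@proper_mx K).
Local Notation properf := (@properf K).

Lemma polyF_unitmx : polyF D \in unitmx.
Proof. by rewrite unitmxE unitfE det_map_mx tof_eq0. Qed.

Lemma invmx_rho x : Di *m polyF (rho D x) = polyF (pip_mx (Di *m x)).
Proof. by rewrite /rho /polyF /tof map_mxM mulmxA mulVmx ?polyF_unitmx // mul1mx. Qed.

Lemma rho_eqP x y : rho D x = rho D y <-> sproper_mx (Di *m (x - y)).
Proof.
split=> [xy | sxy].
  have pxy : pip_mx (Di *m x) = pip_mx (Di *m y).
    by apply: polyF_inj; rewrite -!invmx_rho xy.
  have -> : Di *m (x - y) = (Di *m x - polyF (pip_mx (Di *m x)))
                          - (Di *m y - polyF (pip_mx (Di *m y))).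
    by rewrite pxy opprB addrA subrK mulmxBr.
  exact: sproper_mxB (pip_mxP _) (pip_mxP _).
congr (D *m _); apply: pip_mx_unique.
rewrite -(subrK (Di *m y) (Di *m x)) -addrA -mulmxBr.
exact: sproper_mxD sxy (pip_mxP _).
Qed.

Lemma rhoZ q x y :
  properf q -> rho D x = rho D y -> rho D (q *: x) = rho D (q *: y).
Proof.
move=> pq /rho_eqP sxy; apply/rho_eqP; rewrite -scalerBr -scalemxAr.
exact: sproper_mxZ.
Qed.

Lemma Uact_rho q x : proper_mx x -> properf q -> Uact D q (rho D x) = rho D (q *: x).
Proof.
move=> px pq; have [_] := epsilon_spec (inhabits 0)
  (fun y => proper_mx y /\ rho D y = rho D x) (ex_intro _ x (conj px erefl)).
exact: rhoZ.
Qed.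

Lemma iter_Nmap_rho k x :
  proper_mx x -> iter k (Nmap D) (rho D x) = rho D (sF^-1 ^+ k *: x).
Proof.
move=> px; elim: k => [|k IH]; first by rewrite expr0 scale1r.
rewrite iterS {}IH /Nmap Uact_rho; first by rewrite scalerA -exprS.
  exact: proper_mxZ (properf_sFVX K k) px.
by have := properf_sFVX K 1; rewrite expr1.
Qed.

Lemma rho_sFVXZ_eq0 k x : (forall i j, size (\adj D i j) <= k)%N -> proper_mx x ->
  rho D (sF^-1 ^+ k *: x) = 0.
Proof.
move=> adjk px; rewrite /rho.
suff -> : pip_mx (Di *m (sF^-1 ^+ k *: x)) = 0 by rewrite mulmx0.
apply: pip_mx_unique; rewrite polyF0 subr0.
rewrite /invmx polyF_unitmx // -scalemxAl -scalemxAr scalemxAl det_map_mx.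
apply: sproper_mxZ; first exact: properf_tofV.
apply: sproper_mxMr px => i j; rewrite mxE -map_mx_adj mxE.
exact: sproperf_sFVXM.
Qed.

Lemma Nmap_nilpotent : exists k, forall v, inU D v -> iter k (Nmap D) v = 0.
Proof.
exists (\max_(i < n) \max_(j < n) size (\adj D i j)) => _ [x [px <-]].
rewrite iter_Nmap_rho // rho_sFVXZ_eq0 // => i j.
exact: leq_trans (leq_bigmax j) (leq_bigmax i).
Qed.

Lemma iter_Nmap_eq0 k nu v : (forall v, inU D v -> iter k (Nmap D) v = 0) ->
  inU D v -> (k <= nu)%N -> iter nu (Nmap D) v = 0.
Proof.
move=> Nk [x [px <-]] /subnKC <-; rewrite iterD iter_Nmap_rho // Nk //.
exists (sF^-1 ^+ (nu - k) *: x); split=> //.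
exact: proper_mxZ (properf_sFVX K _) px.
Qed.

End Realization.

Section MarkovParameters.
Variable K : fieldType.
Local Notation sF := (sF K).

Lemma at0_mx_eq m p (A B : 'M[RF K]_(m, p)) :
  sproper_mx (A - B) -> at0_mx A = at0_mx B.
Proof.
move=> sAB; apply/matrixP => i j; rewrite !mxE (@pip_eq _ _ (B i j)) //.
by move: (sAB i j); rewrite !mxE.
Qed.

Lemma Cmap_rho m n (P : 'M[RF K]_(m, n)) (D : 'M[{poly K}]_n) x : \det D != 0 ->
  proper_mx P -> Cmap P D (rho D x) = - at0_mx (P *m invmx (polyF D) *m x).
Proof.
move=> detD pP; rewrite /Cmap -!mulmxA (invmx_rho detD); congr (- _).
symmetry; apply: at0_mx_eq; rewrite -mulmxBr.
exact: sproper_mxMl pP (pip_mxP _).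
Qed.

Lemma Cmap0 m n (P : 'M[RF K]_(m, n)) D : Cmap P D 0 = 0.
Proof. by apply/matrixP => i j; rewrite /Cmap polyF0 mulmx0 !mxE pip0 horner0 oppr0. Qed.

Lemma Gcoef_mulmxE m p (G : 'M[RF K]_(m, p)) nu (xi : 'cV[K]_p) :
  Gcoef G nu *m xi = at0_mx (sF^-1 ^+ nu *: (G *m constF xi)).
Proof.
apply/matrixP => i j; rewrite !mxE horner_coef0 coef0_pip_sFVXM pip_sum coef_sum.
by apply: eq_bigr => k _; rewrite !mxE pipMC coefMC.
Qed.

Lemma Gcoef_realization m p n (G W : 'M[RF K]_(m, p)) (P : 'M[RF K]_(m, n))
    (Q : 'M[RF K]_(n, p)) (D : 'M[{poly K}]_n) :
  sproper_mx W -> proper_mx P -> proper_mx Q -> \det D != 0 ->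
  G = W + P *m invmx (polyF D) *m Q ->
  forall nu (xi : 'cV[K]_p),
    Gcoef G nu *m xi = - Cmap P D (iter nu (Nmap D) (Bmap D Q xi)).
Proof.
move=> sW pP pQ detD -> nu xi.
have pQxi := proper_mxM pQ (proper_mx_constF xi).
rewrite /Bmap (iter_Nmap_rho detD _ pQxi) (Cmap_rho _ detD pP) opprK Gcoef_mulmxE.
apply: at0_mx_eq; rewrite -scalemxAr mulmxDl scalerDr !mulmxA addrK.
exact: sproper_mxZ (properf_sFVX K nu) (sproper_mxMr sW (proper_mx_constF xi)).
Qed.

End MarkovParameters.

Lemma sumr_ord_widen (V : nmodType) (F : nat -> V) a b :
  (a <= b)%N -> (forall i, (a <= i)%N -> F i = 0) ->
  \sum_(i < a) F i = \sum_(i < b) F i.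
Proof.
move=> ab Fa; rewrite (big_ord_widen _ _ ab) big_mkcond; apply: eq_bigr => i _.
by case: ltnP => // /Fa ->.
Qed.

Lemma monvec0 (K : fieldType) m nu : monvec (0 : 'cV[K]_m) nu = 0.
Proof. by apply/matrixP => i j; rewrite !mxE mul0r. Qed.

Lemma monvecN (K : fieldType) m (c : 'cV[K]_m) nu : monvec (- c) nu = - monvec c nu.
Proof. by apply/matrixP => i j; rewrite !mxE polyCN mulNr. Qed.


Lemma sum_Gcoef_realization (K : fieldType) m p n t k (G W : 'M[RF K]_(m, p))
    (P : 'M[RF K]_(m, n)) (Q : 'M[RF K]_(n, p)) (D : 'M[{poly K}]_n) :
  sproper_mx W -> proper_mx P -> proper_mx Q -> \det D != 0 ->
  G = W + P *m invmx (polyF D) *m Q ->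
  (forall nu, (t < nu)%N -> Gcoef G nu = 0) ->
  (forall v, inU D v -> iter k (Nmap D) v = 0) ->
  forall xi : 'cV[K]_p,
    \sum_(nu < t.+1) monvec (Gcoef G nu *m xi) nu
    = - \sum_(nu < k) monvec (Cmap P D (iter nu (Nmap D) (Bmap D Q xi))) nu.
Proof.
move=> sW pP pQ detD eG Gt Nk xi.
have markov := Gcoef_realization sW pP pQ detD eG.
set F := fun nu => monvec (Gcoef G nu *m xi) nu.
have BU : inU D (Bmap D Q xi).
  by exists (Q *m constF xi); split=> //; apply: proper_mxM pQ (proper_mx_constF xi).
have -> : \sum_(nu < t.+1) F nu = \sum_(nu < t.+1 + k) F nu.
  apply: sumr_ord_widen (leq_addr _ _) _ => nu /Gt Gnu.
  by rewrite /F Gnu mul0mx monvec0.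
have <- : \sum_(nu < k) F nu = \sum_(nu < t.+1 + k) F nu.
  apply: sumr_ord_widen (leq_addl _ _) _ => nu kn.
  by rewrite /F markov (iter_Nmap_eq0 detD Nk BU kn) Cmap0 oppr0 monvec0.
by rewrite -sumrN; apply: eq_bigr => nu _; rewrite /F markov monvecN.
Qed.

Theorem mainTheorem6 (K : fieldType) (m p n2 t : nat)
  (G W2 : 'M[RF K]_(m, p)) (P2 : 'M[RF K]_(m, n2)) (Q2 : 'M[RF K]_(n2, p))
  (D2 : 'M[{poly K}]_n2) :
  sproper_mx W2 -> proper_mx P2 -> proper_mx Q2 -> \det D2 != 0 ->
  G = W2 + P2 *m invmx (polyF D2) *m Q2 ->
  (* pi_+ G = \sum_{nu=0}^t G_nu s^nu *)
  (forall nu, (t < nu)%N -> Gcoef G nu = 0) ->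
  [/\ (forall nu, (nu <= t)%N -> forall xi : 'cV[K]_p,
         Gcoef G nu *m xi = - Cmap P2 D2 (iter nu (Nmap D2) (Bmap D2 Q2 xi))),
      (exists k, forall v, inU D2 v -> iter k (Nmap D2) v = 0) &
      (forall k, (forall v, inU D2 v -> iter k (Nmap D2) v = 0) ->
       forall xi : 'cV[K]_p,
         \sum_(nu < t.+1) monvec (Gcoef G nu *m xi) nu
         = - \sum_(nu < k) monvec (Cmap P2 D2 (iter nu (Nmap D2) (Bmap D2 Q2 xi))) nu)].
Proof.
move=> sW pP pQ detD eG Gt; split.
- by move=> nu _; apply: Gcoef_realization.
- exact: Nmap_nilpotent.
- by move=> k Nk; apply: sum_Gcoef_realization.
Qed.
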